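(* Isomorphisms in $\mathsf{DeV^S}$ are given by structure-preserving bijections. Precisely, for de Vries algebras $(A,S_A)$ and $(B,S_B)$: (i) if $f\colon A\to B$ is a boolean isomorphism with $a\mathrel{S_A}a'\iff f(a)\mathrel{S_B}f(a')$ for all $a,a'\in A$, then the relation $T\colon A\to B$ defined by $a\mathrel{T}b\iff f(a)\mathrel{S_B}b$ is an isomorphism in $\mathsf{DeV^S}$ with inverse $T^\dagger$ (where $b\mathrel{T^\dagger}a\iff\neg a\mathrel{T}\neg b$); (ii) conversely, every isomorphism $T\colon(A,S_A)\to(B,S_B)$ in $\mathsf{DeV^S}$ is of this form for some such boolean isomorphism $f$. In particular, two de Vries algebras are isomorphic in $\mathsf{DeV^S}$ iff there is a boolean isomorphism between them preserving and reflecting the proximities.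
   Context: A de Vries algebra is a pair $(B,S)$ with $B$ a complete boolean algebra and $S\subseteq B\times B$ satisfying (S1) $0\mathrel{S}0$, $1\mathrel{S}1$; (S2) $a,b\mathrel{S}c\Rightarrow(a\vee b)\mathrel{S}c$; (S3) $a\mathrel{S}c,d\Rightarrow a\mathrel{S}(c\wedge d)$; (S4) $a\le b\mathrel{S}c\le d\Rightarrow a\mathrel{S}d$; (S5) $a\mathrel{S}b\Rightarrow a\le b$; (S6) $a\mathrel{S}b\Rightarrow\neg b\mathrel{S}\neg a$; (S7) $a\mathrel{S}b\Rightarrow\exists c\,(a\mathrel{S}c\mathrel{S}b)$; (S8) $a\ne0\Rightarrow\exists b\ne0,\ b\mathrel{S}a$. $\mathsf{DeV^S}$: objects de Vries algebras; morphisms $(A,S_A)\to(B,S_B)$ are relations $T\subseteq A\times B$ satisfying (S1)–(S4) and $T\circ S_A=T=S_B\circ T$; identity on $(A,S_A)$ is $S_A$; composition is relational composition. *)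

(* boolean algebras are MathComp's complemented distributive
   lattices with top and bottom (ctbDistrLatticeType). *)
From HB Require Import structures.
From mathcomp Require Import all_boot all_order.
Set Implicit Arguments. Unset Strict Implicit. Unset Printing Implicit Defensive.
Import Order.Theory.
Local Open Scope order_scope.

Definition complete_lattice (d : Order.disp_t) (B : ctbDistrLatticeType d) : Prop :=
  forall P : B -> Prop, exists s : B,
    (forall x, P x -> x <= s) /\ (forall u, (forall x, P x -> x <= u) -> s <= u).

Definition rel_eqv (X Y : Type) (R R' : X -> Y -> Prop) : Prop :=
  forall x y, R x y <-> R' x y.

(* Diagrammatic composition: [rcomp R R'] is the relational composite R' o R. *)
Definition rcomp (X Y Z : Type) (R : X -> Y -> Prop) (R' : Y -> Z -> Prop)
  : X -> Z -> Prop := fun x z => exists y, R x y /\ R' y z.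

Definition S1to4 (dA dB : Order.disp_t) (A : ctbDistrLatticeType dA)
  (B : ctbDistrLatticeType dB) (T : A -> B -> Prop) : Prop :=
  [/\ T \bot \bot /\ T \top \top,
      (forall a b c, T a c -> T b c -> T (a `|` b) c),
      (forall a c e, T a c -> T a e -> T a (c `&` e)) &
      (forall a b c e, a <= b -> T b c -> c <= e -> T a e)].

Definition deVries (d : Order.disp_t) (B : ctbDistrLatticeType d)
  (S : B -> B -> Prop) : Prop :=
  complete_lattice B /\
  S1to4 S /\
  (forall a b, S a b -> a <= b) /\
  (forall a b, S a b -> S (~` b) (~` a)) /\
  (forall a b, S a b -> exists c, S a c /\ S c b) /\
  (forall a, a != \bot -> exists b, b != \bot /\ S b a).

Definition deV_morphism (dA dB : Order.disp_t) (A : ctbDistrLatticeType dA)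
  (B : ctbDistrLatticeType dB) (SA : A -> A -> Prop) (SB : B -> B -> Prop)
  (T : A -> B -> Prop) : Prop :=
  [/\ S1to4 T, rel_eqv (rcomp SA T) T & rel_eqv (rcomp T SB) T].

(* Isomorphisms of DeV^S (identity on (A,SA) is SA, composition relational). *)
Definition deV_iso (dA dB : Order.disp_t) (A : ctbDistrLatticeType dA)
  (B : ctbDistrLatticeType dB) (SA : A -> A -> Prop) (SB : B -> B -> Prop)
  (T : A -> B -> Prop) : Prop :=
  deV_morphism SA SB T /\
  exists T' : B -> A -> Prop, [/\ deV_morphism SB SA T',
      rel_eqv (rcomp T T') SA & rel_eqv (rcomp T' T) SB].

Definition dagger (dA dB : Order.disp_t) (A : ctbDistrLatticeType dA)
  (B : ctbDistrLatticeType dB) (T : A -> B -> Prop) : B -> A -> Prop :=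
  fun b a => T (~` a) (~` b).

Definition bool_iso (dA dB : Order.disp_t) (A : ctbDistrLatticeType dA)
  (B : ctbDistrLatticeType dB) (f : A -> B) : Prop :=
  bijective f /\ f \bot = \bot /\ f \top = \top /\
  (forall a a', f (a `&` a') = f a `&` f a') /\
  (forall a a', f (a `|` a') = f a `|` f a') /\
  (forall a, f (~` a) = ~` f a).

Definition prox_preserving (dA dB : Order.disp_t) (A : ctbDistrLatticeType dA)
  (B : ctbDistrLatticeType dB) (SA : A -> A -> Prop) (SB : B -> B -> Prop)
  (f : A -> B) : Prop :=
  forall a a', SA a a' <-> SB (f a) (f a').

(* For (i), S6 turns T^dagger into b |-> S_B b (f -), which is b |-> S_A (f^-1 b) -
   of the same shape as T; all identities then reduce to S_B ; S_B = S_B (S5, S7).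

   For (ii), let T' be the inverse of T and put f a := \/ {b | b T' a}.  Since
   T' ; T = S_B, every T-image of a bounds f a, whence a T b -> f a S_B b.  For the
   converse it suffices that f a T' a' forces a <= a'; otherwise S8 yields e <> 0
   with e S_A a /\ ~a', and then e T f a and, because T' is contained in T^dagger,
   also e T ~f a, so e T 0, while T reflects 0 as T ; T' = S_A.  Doing the same
   with T' gives g with b T' a <-> g b S_A a.  An element of a de Vries algebra is
   determined by the elements it is S-below, so f and g are mutually inverse
   monotone maps, hence a boolean isomorphism, and they preserve proximity. *)
From HB Require Import structures.
From mathcomp Require Import all_boot all_order.
From Stdlib Require Import ClassicalEpsilon FunctionalExtensionality PropExtensionality.

Set Implicit Arguments. Unset Strict Implicit. Unset Printing Implicit Defensive.
Import Order.Theory.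
Local Open Scope order_scope.

Lemma rel_eqv_eq (X Y : Type) (R R' : X -> Y -> Prop) : rel_eqv R R' -> R = R'.
Proof.
move=> eqRR'; apply: functional_extensionality => x.
apply: functional_extensionality => y; exact: propositional_extensionality.
Qed.

Section Sup.
Variables (d : Order.disp_t) (B : ctbDistrLatticeType d) (hc : complete_lattice B).

Definition sup (P : B -> Prop) : B :=
  proj1_sig (constructive_indefinite_description _ (hc P)).

Lemma sup_ub (P : B -> Prop) x : P x -> x <= sup P.
Proof. exact: (proj2_sig (constructive_indefinite_description _ (hc P))).1. Qed.

Lemma sup_least (P : B -> Prop) u : (forall x, P x -> x <= u) -> sup P <= u.
Proof. exact: (proj2_sig (constructive_indefinite_description _ (hc P))).2. Qed.

End Sup.

Section S1to4Theory.
Variables (dA dB : Order.disp_t) (A : ctbDistrLatticeType dA).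
Variables (B : ctbDistrLatticeType dB) (T : A -> B -> Prop).
Hypothesis hT : S1to4 T.

Lemma S1to4_bot : T \bot \bot. Proof. by case: hT => [[]]. Qed.
Lemma S1to4_top : T \top \top. Proof. by case: hT => [[]]. Qed.

Lemma S1to4_join a a' b : T a b -> T a' b -> T (a `|` a') b.
Proof. by case: hT => _ join _ _; apply: join. Qed.

Lemma S1to4_meet a b b' : T a b -> T a b' -> T a (b `&` b').
Proof. by case: hT => _ _ meet _; apply: meet. Qed.

Lemma S1to4_mono a a' b b' : a <= a' -> T a' b -> b <= b' -> T a b'.
Proof. by case: hT => _ _ _ mono; apply: mono. Qed.

End S1to4Theory.

Section DeVriesTheory.
Variables (d : Order.disp_t) (B : ctbDistrLatticeType d) (S : B -> B -> Prop).
Hypothesis hS : deVries S.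

Lemma deVries_complete : complete_lattice B. Proof. by case: hS. Qed.
Lemma deVries_S1to4 : S1to4 S. Proof. by case: hS => _ []. Qed.

Lemma prox_le x y : S x y -> x <= y.
Proof. by case: hS => _ [_ [le _]]; apply: le. Qed.

Lemma prox_mono x x' y y' : x <= x' -> S x' y -> y <= y' -> S x y'.
Proof. exact: (S1to4_mono deVries_S1to4). Qed.

Lemma prox_trans x y z : S x y -> S y z -> S x z.
Proof. by move=> Sxy /prox_le le_yz; exact: (prox_mono (lexx x) Sxy le_yz). Qed.

Lemma prox_compl x y : S (~` y) (~` x) <-> S x y.
Proof.
have S6 u v : S u v -> S (~` v) (~` u) by case: hS => _ [_ [_ [S6 _]]]; apply: S6.
by split=> [/S6|/S6//]; rewrite !complK.
Qed.

Lemma prox_interp x y : S x y -> exists z, S x z /\ S z y.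
Proof. by case: hS => _ [_ [_ [_ [S7 _]]]]; apply: S7. Qed.

Lemma prox_dense x : x != \bot -> exists y, y != \bot /\ S y x.
Proof. by case: hS => _ [_ [_ [_ [_ S8]]]]; apply: S8. Qed.

Lemma prox_idem : rel_eqv (rcomp S S) S.
Proof. by move=> x y; split=> [[z [Sxz Szy]]|/prox_interp//]; apply: prox_trans Sxz Szy. Qed.

Lemma le_of_prox_dense x y : (forall e, S e (x `&` ~` y) -> e = \bot) -> x <= y.
Proof.
move=> below0; rewrite -[y]complK -disj_leC; apply/negPn/negP.
by move=> /prox_dense [e [/eqP + /below0]].
Qed.

Lemma le_of_prox_above x y : (forall e, S y e -> S x e) -> x <= y.
Proof.
move=> above; apply: le_of_prox_dense => e Se.
have e_le_x : e <= x := le_trans (prox_le Se) (leIl _ _).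
have : S y (~` e) by apply/prox_compl; rewrite complK; apply: prox_mono (lexx e) Se (leIr _ _).
move=> /above /prox_le x_le_ne; apply/eqP.
by rewrite -[e]meetxx disj_leC (le_trans e_le_x x_le_ne).
Qed.

Lemma prox_above_inj x y : (forall e, S x e <-> S y e) -> x = y.
Proof.
by move=> eqxy; apply/le_anti; rewrite !le_of_prox_above // => e /eqxy.
Qed.

End DeVriesTheory.

Section BoolIso.
Variables (dA dB : Order.disp_t) (A : ctbDistrLatticeType dA).
Variables (B : ctbDistrLatticeType dB) (f : A -> B) (g : B -> A).

Lemma bool_iso_homo : bool_iso f -> {homo f : x y / x <= y}.
Proof. by move=> [_ [_ [_ [fI _]]]] x y /meet_idPl <-; rewrite fI leIr. Qed.

Lemma bool_isoV : bool_iso f -> cancel f g -> cancel g f -> bool_iso g.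
Proof.
move=> [_ [f0 [f1 [fI [fU fC]]]]] fK gK.
split; first by exists f.
split; first by rewrite -f0 fK.
split; first by rewrite -f1 fK.
split; first by move=> x y; rewrite -{1}(gK x) -{1}(gK y) -fI fK.
split; first by move=> x y; rewrite -{1}(gK x) -{1}(gK y) -fU fK.
by move=> x; rewrite -{1}(gK x) -fC fK.
Qed.

Lemma bool_iso_of_order_iso : cancel f g -> cancel g f ->
  {homo f : x y / x <= y} -> {homo g : x y / x <= y} -> bool_iso f.
Proof.
move=> fK gK f_homo g_homo.
have f0 : f \bot = \bot.
  by apply/eqP; rewrite -lex0 -(gK \bot) f_homo ?le0x.
have f1 : f \top = \top.
  by apply/eqP; rewrite -le1x -(gK \top) f_homo ?lex1.
have fI x y : f (x `&` y) = f x `&` f y.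
  apply/le_anti; rewrite lexI !f_homo ?leIl ?leIr //=.
  rewrite -[f x `&` f y]gK f_homo // lexI.
  by rewrite -[X in (_ <= X) && _]fK -[Y in _ && (_ <= Y)]fK !g_homo ?leIl ?leIr.
have fU x y : f (x `|` y) = f x `|` f y.
  apply/le_anti; rewrite leUx !f_homo ?leUl ?leUr // andbT.
  rewrite -[f x `|` f y]gK f_homo // leUx.
  by rewrite -[X in (X <= _) && _]fK -[Y in _ && (Y <= _)]fK !g_homo ?leUl ?leUr.
split; first by exists g.
do 4!split=> //.
move=> x; apply/le_anti/andP; split.
  by rewrite -disj_leC -fI meetCx f0.
by rewrite -[f (~` x)]complK -disj_leC -complU -fU joinxC f1 compl1.
Qed.

End BoolIso.

Section DeVIsoOfBoolIso.
Variables (dA dB : Order.disp_t) (A : ctbDistrLatticeType dA).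
Variables (B : ctbDistrLatticeType dB) (SA : A -> A -> Prop) (SB : B -> B -> Prop).
Variables (f : A -> B) (g : B -> A).
Hypotheses (hB : deVries SB) (f_iso : bool_iso f) (f_prox : prox_preserving SA SB f).
Hypothesis gK : cancel g f.

Lemma deV_morphism_of_bool_iso : deV_morphism SA SB (fun a b => SB (f a) b).
Proof.
case: f_iso => _ [f0 [f1 [_ [fU _]]]]; have SB_S1to4 := deVries_S1to4 hB.
split; first split.
- by rewrite f0 f1; split; [apply: S1to4_bot SB_S1to4 | apply: S1to4_top SB_S1to4].
- by move=> a a' b Sab Sa'b; rewrite fU; apply: S1to4_join.
- by move=> a b b'; apply: S1to4_meet.
- by move=> a a' b b' /(bool_iso_homo f_iso); apply: prox_mono.
- move=> a b; split=> [[a' [/f_prox Saa' Sa'b]]|/(prox_interp hB) [c [Sac Scb]]].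
    exact: prox_trans Saa' Sa'b.
  by exists (g c); rewrite f_prox gK.
- by move=> a b; exact: (prox_idem hB (f a) b).
Qed.

Lemma dagger_bool_iso :
  dagger (fun a b => SB (f a) b) = fun b a => SB b (f a).
Proof.
case: f_iso => _ [_ [_ [_ [_ fC]]]].
by apply: rel_eqv_eq => b a; rewrite /dagger fC; apply: prox_compl.
Qed.

End DeVIsoOfBoolIso.

Lemma deV_iso_of_bool_iso (dA dB : Order.disp_t) (A : ctbDistrLatticeType dA)
  (B : ctbDistrLatticeType dB) (SA : A -> A -> Prop) (SB : B -> B -> Prop) (f : A -> B) :
  deVries SA -> deVries SB -> bool_iso f -> prox_preserving SA SB f ->
  let T := fun a b => SB (f a) b in
  [/\ deV_morphism SA SB T, deV_morphism SB SA (dagger T),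
      rel_eqv (rcomp T (dagger T)) SA & rel_eqv (rcomp (dagger T) T) SB].
Proof.
move=> hA hB f_iso f_prox T.
have [[g fK gK] _] := f_iso.
have g_prox : prox_preserving SB SA g by move=> b b'; rewrite f_prox !gK.
have daggerT : dagger T = fun b a => SB b (f a) := dagger_bool_iso hB f_iso.
have dagger_prox : dagger T = fun b a => SA (g b) a.
  by rewrite daggerT; apply: rel_eqv_eq => b a; rewrite f_prox gK.
split.
- exact: (deV_morphism_of_bool_iso hB f_iso f_prox gK).
- by rewrite dagger_prox; exact: (deV_morphism_of_bool_iso hA (bool_isoV f_iso fK gK) g_prox fK).
- by rewrite daggerT => a a'; rewrite f_prox; exact: (prox_idem hB (f a) (f a')).
- rewrite daggerT => b b'; split=> [[a [Sba Sab']]|/(prox_interp hB) [c [Sbc Scb']]].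
    exact: prox_trans Sba Sab'.
  by exists (g c); rewrite /T gK.
Qed.

Lemma inverse_reflects_bot (dA dB : Order.disp_t) (A : ctbDistrLatticeType dA)
  (B : ctbDistrLatticeType dB) (SA : A -> A -> Prop) (T : A -> B -> Prop)
  (T' : B -> A -> Prop) :
  deVries SA -> S1to4 T' -> rel_eqv (rcomp T T') SA -> forall a, T a \bot -> a = \bot.
Proof.
move=> hA hT' TT' a Ta0; apply/eqP; rewrite -lex0; apply: (prox_le hA).
by apply/TT'; exists \bot; split=> //; apply: S1to4_bot hT'.
Qed.

Section DeVIsoRepresentation.
Variables (dA dB : Order.disp_t) (A : ctbDistrLatticeType dA).
Variables (B : ctbDistrLatticeType dB) (SA : A -> A -> Prop) (SB : B -> B -> Prop).
Variables (T : A -> B -> Prop) (T' : B -> A -> Prop).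
Hypotheses (hA : deVries SA) (hB : deVries SB).
Hypotheses (hT : deV_morphism SA SB T) (hT' : deV_morphism SB SA T').
Hypotheses (TT' : rel_eqv (rcomp T T') SA) (T'T : rel_eqv (rcomp T' T) SB).

Let T_S1to4 : S1to4 T. Proof. by case: hT. Qed.
Let T'_S1to4 : S1to4 T'. Proof. by case: hT'. Qed.

Lemma inverse_sub_dagger b a : T' b a -> dagger T b a.
Proof.
case: hT' => _ _ /(_ b a) T'SA /T'SA [a0 [T'ba0 SAa0a]].
have /TT' [b' [Tnab' T'b'na0]] : SA (~` a) (~` a0) by apply/prox_compl.
have : T' (b `&` b') (a0 `&` ~` a0).
  apply: (S1to4_meet T'_S1to4).
    exact: (S1to4_mono T'_S1to4 (leIl b b') T'ba0 (lexx a0)).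
  exact: (S1to4_mono T'_S1to4 (leIr b' b) T'b'na0 (lexx _)).
rewrite meetxC => /(inverse_reflects_bot hB T_S1to4 T'T) /eqP.
rewrite meetC disj_leC => b'_le_nb.
exact: (S1to4_mono T_S1to4 (lexx _) Tnab' b'_le_nb).
Qed.

Definition iso_map (a : A) : B := sup (deVries_complete hB) (fun b => T' b a).

Lemma iso_map_le a b : T a b -> iso_map a <= b.
Proof.
move=> Tab; apply: sup_least => b' T'b'a.
by apply: (prox_le hB); apply/T'T; exists a.
Qed.

Lemma T_iso_map a a' : SA a a' -> T a (iso_map a').
Proof.
move=> /TT' [b [Tab T'ba']].
exact: (S1to4_mono T_S1to4 (lexx a) Tab (sup_ub _ T'ba')).
Qed.

Lemma le_of_inverse_iso_map a a' : T' (iso_map a) a' -> a <= a'.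
Proof.
move=> /inverse_sub_dagger Tna'nfa; apply: (le_of_prox_dense hA) => e Se.
have /T_iso_map Tefa : SA e a := prox_mono hA (lexx e) Se (leIl _ _).
have Tenfa : T e (~` iso_map a).
  exact: (S1to4_mono T_S1to4 (le_trans (prox_le hA Se) (leIr _ _)) Tna'nfa (lexx _)).
apply: (inverse_reflects_bot hA T'_S1to4 TT').
by rewrite -(meetxC (iso_map a)); apply: S1to4_meet.
Qed.

Lemma iso_mapP a b : T a b <-> SB (iso_map a) b.
Proof.
split.
- case: hT => _ _ /(_ a b) TSB /TSB [b' [Tab' SBb'b]].
  exact: (prox_mono hB (iso_map_le Tab') SBb'b (lexx b)).
- move=> /T'T [a' [/le_of_inverse_iso_map le_aa' Ta'b]].
  exact: (S1to4_mono T_S1to4 le_aa' Ta'b (lexx b)).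
Qed.

End DeVIsoRepresentation.

Section RepresentedIso.
Variables (dA dB : Order.disp_t) (A : ctbDistrLatticeType dA).
Variables (B : ctbDistrLatticeType dB) (SA : A -> A -> Prop) (SB : B -> B -> Prop).
Variables (T : A -> B -> Prop) (T' : B -> A -> Prop) (f : A -> B) (g : B -> A).
Hypotheses (hA : deVries SA) (hB : deVries SB).
Hypotheses (TfP : forall a b, T a b <-> SB (f a) b) (T'gP : forall b a, T' b a <-> SA (g b) a).
Hypotheses (TT' : rel_eqv (rcomp T T') SA) (T'T : rel_eqv (rcomp T' T) SB).

Lemma represented_homo : S1to4 T -> {homo f : x y / x <= y}.
Proof.
move=> hT x y le_xy; apply: (le_of_prox_above hB) => e /TfP Tye.
by apply/TfP; exact: (S1to4_mono hT le_xy Tye (lexx e)).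
Qed.

Lemma represented_cancel : rel_eqv (rcomp SA T) T -> cancel g f.
Proof.
move=> SAT b; apply: (prox_above_inj hB) => e; split.
- by move=> /TfP /SAT [a [/T'gP T'ba Tae]]; apply/T'T; exists a.
- by move=> /T'T [a [/T'gP SAgba Tae]]; apply/TfP/SAT; exists a.
Qed.

Hypotheses (fK : cancel f g) (gK : cancel g f).
Hypotheses (f_homo : {homo f : x y / x <= y}) (g_homo : {homo g : x y / x <= y}).

Lemma represented_prox : prox_preserving SA SB f.
Proof.
move=> a a'; split.
- move=> /TT' [b [/TfP SBfab /T'gP /(prox_le hA) /f_homo]].
  by rewrite gK => le_bfa'; exact: (prox_mono hB (lexx _) SBfab le_bfa').
- move=> /T'T [a1 [/T'gP + /TfP /(prox_le hB) /g_homo]].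
  by rewrite !fK => SAaa1 le_a1a'; exact: (prox_mono hA (lexx _) SAaa1 le_a1a').
Qed.

End RepresentedIso.

Lemma bool_iso_of_deV_iso (dA dB : Order.disp_t) (A : ctbDistrLatticeType dA)
  (B : ctbDistrLatticeType dB) (SA : A -> A -> Prop) (SB : B -> B -> Prop)
  (T : A -> B -> Prop) :
  deVries SA -> deVries SB -> deV_iso SA SB T ->
  exists f : A -> B, [/\ bool_iso f, prox_preserving SA SB f &
                         forall a b, T a b <-> SB (f a) b].
Proof.
move=> hA hB [hT [T' [hT' TT' T'T]]].
have TfP := iso_mapP hA hB hT hT' TT' T'T.
have T'gP := iso_mapP hB hA hT' hT T'T TT'.
have [T_S1to4 SAT _] := hT; have [T'_S1to4 SBT' _] := hT'.
have gK := represented_cancel hB TfP T'gP T'T SAT.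
have fK := represented_cancel hA T'gP TfP TT' SBT'.
have f_homo := represented_homo hB TfP T_S1to4.
have g_homo := represented_homo hA T'gP T'_S1to4.
exists (iso_map T' hB); split=> //.
- exact: bool_iso_of_order_iso fK gK f_homo g_homo.
- exact: represented_prox hA hB TfP T'gP TT' T'T fK gK f_homo g_homo.
Qed.

Theorem theorem5p4 (dA dB : Order.disp_t) (A : ctbDistrLatticeType dA)
  (B : ctbDistrLatticeType dB) (SA : A -> A -> Prop) (SB : B -> B -> Prop) :
  deVries SA -> deVries SB ->
  [/\ (* (i) *)
      (forall f : A -> B, bool_iso f -> prox_preserving SA SB f ->
         let T := fun (a : A) (b : B) => SB (f a) b in
         [/\ deV_morphism SA SB T, deV_morphism SB SA (dagger T),
             rel_eqv (rcomp T (dagger T)) SA & rel_eqv (rcomp (dagger T) T) SB]),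
      (* (ii) *)
      (forall T : A -> B -> Prop, deV_iso SA SB T ->
         exists f : A -> B, [/\ bool_iso f, prox_preserving SA SB f &
                                forall a b, T a b <-> SB (f a) b]) &
      (* in particular *)
      ((exists T : A -> B -> Prop, deV_iso SA SB T) <->
       (exists f : A -> B, bool_iso f /\ prox_preserving SA SB f))].
Proof.
move=> hA hB; split=> [f | T | ]; [exact: deV_iso_of_bool_iso | exact: bool_iso_of_deV_iso |].
split=> [[T /(bool_iso_of_deV_iso hA hB) [f [f_iso f_prox _]]] | [f [f_iso f_prox]]].
  by exists f.
have [? ? ? ?] := deV_iso_of_bool_iso hA hB f_iso f_prox.
by exists (fun a b => SB (f a) b); split=> //; exists (dagger (fun a b => SB (f a) b)).
Qed.
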